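(* Let $A\in\mathbb{C}^{N\times N}$ with $\|A\|\leq1$, with Jordan decomposition $A=P\Lambda P^{-1}$, $\Lambda=\Lambda_1\oplus\cdots\oplus\Lambda_M$ where $\Lambda_j$ is a Jordan block with eigenvalue $\lambda_j$, and suppose every Jordan block has dimension at most $m_{\max}$. Let $\kappa=\min\|P\|\,\|P^{-1}\|$ over all such Jordan decompositions and let $K\geq\kappa$. For $\mu\in\mathbb{C}$ with $|\mu|\leq1$, let $C(\mu)=\sigma_{\min}(A-\mu I)$. Then $$C(\mu)\;\leq\;\min_{j}|\mu-\lambda_j|\;\leq\;3\,(K\,C(\mu))^{1/m_{\max}}.$$
   Context: $\|\cdot\|$ is the spectral norm; $\sigma_{\min}$ denotes the smallest singular value. *)

From HB Require Import structures.
From mathcomp Require Import all_boot all_order all_algebra.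
From mathcomp Require Import all_classical all_reals.
From mathcomp Require Import complex.
Set Implicit Arguments. Unset Strict Implicit. Unset Printing Implicit Defensive.
Import Order.TTheory GRing.Theory Num.Theory.
Local Open Scope ring_scope.
Local Open Scope classical_set_scope.

Definition cmod (R : realType) (z : R[i]) : R := ComplexField.Normc.normc z.

Definition vnorm (R : realType) (N : nat) (v : 'cV[R[i]]_N) : R :=
  Num.sqrt (\sum_(i < N) cmod (v i 0) ^+ 2).

Definition specnorm (R : realType) (N : nat) (A : 'M[R[i]]_N) : R :=
  sup [set vnorm (A *m v) | v in [set v : 'cV[R[i]]_N | vnorm v = 1]].

Definition sigma_min (R : realType) (N : nat) (A : 'M[R[i]]_N) : R :=
  inf [set vnorm (A *m v) | v in [set v : 'cV[R[i]]_N | vnorm v = 1]].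

Definition jordan_block (R : realType) (n : nat) (lam : R[i]) : 'M[R[i]]_n :=
  \matrix_(i < n, j < n)
    (if i == j then lam else if (j : nat) == i.+1 then 1 else 0).

Definition is_jordan_decomp (R : realType) (N : nat) (A P : 'M[R[i]]_N)
    (M : nat) (s : 'I_M -> nat) (l : 'I_M -> R[i]) : Prop :=
  P \in unitmx /\ (forall j, (0 < s j)%N) /\
  exists E : (\sum_(j < M) s j)%N = N,
    A = P *m castmx (E, E) (mxdiag (fun j => jordan_block (s j) (l j)))
          *m invmx P.

Definition jordan_kappa (R : realType) (N : nat) (A : 'M[R[i]]_N) : R :=
  inf [set specnorm P * specnorm (invmx P) |
       P in [set P : 'M[R[i]]_N |
             exists M (s : 'I_M -> nat) (l : 'I_M -> R[i]),
               is_jordan_decomp A P s l]].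

(* Every lambda_j is an eigenvalue (the first vector of its Jordan chain), and A - mu
   maps a unit eigenvector to a vector of length |mu - lambda_j|: this gives
   C(mu) <= |mu - lambda_j|.

   For the other bound let delta = min_j |mu - lambda_j| > 0; then delta <= 2, since
   |mu| <= 1 and |lambda_j| <= ||A|| <= 1.  In a Jordan basis A - mu is an upper
   bidiagonal matrix T whose diagonal entries have modulus >= delta and whose 0/1
   superdiagonal has no run of m_max ones, so back substitution gives
   ||x|| <= (sum_(t < m_max) delta^-(t+1)) ||T x|| <= (2/delta)^m_max ||T x||, i.e.
   delta^m_max <= 2^m_max ||P|| ||P^-1|| C(mu).  This holds for every Jordan
   decomposition of A: all of them have the same eigenvalues, and their blocks are
   also of size <= m_max, because the largest block for lambda has the size of the
   ascent of A - lambda.  Taking the infimum over P gives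
   delta^m_max <= 2^m_max kappa C(mu) <= 2^m_max K C(mu). *)

From HB Require Import structures.
From mathcomp Require Import all_boot all_order all_algebra.
From mathcomp Require Import all_classical all_reals.
From mathcomp Require Import complex.
From mathcomp Require Import exp.
From mathcomp Require Import ring lra.
Import Order.TTheory GRing.Theory Num.Theory.
Set Implicit Arguments. Unset Strict Implicit. Unset Printing Implicit Defensive.
Local Open Scope ring_scope.

Section ComplexModulus.
Variable R : realType.
Implicit Types x y z : R[i].

Lemma cmod_ge0 z : 0 <= cmod z.
Proof. by case: z => a b; rewrite /cmod /= sqrtr_ge0. Qed.

Lemma cmod0 : cmod (0 : R[i]) = 0.
Proof. exact: ComplexField.Normc.normc0. Qed.

Lemma cmod1 : cmod (1 : R[i]) = 1.
Proof. exact: ComplexField.Normc.normc1. Qed.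

Lemma cmod_eq0 z : cmod z = 0 -> z = 0.
Proof. exact: ComplexField.Normc.eq0_normc. Qed.

Lemma cmodM x y : cmod (x * y) = cmod x * cmod y.
Proof. exact: ComplexField.Normc.normcM. Qed.

Lemma cmodV z : cmod z^-1 = (cmod z)^-1.
Proof. exact: ComplexField.Normc.normcV. Qed.

Lemma cmodN z : cmod (- z) = cmod z.
Proof. exact: normcN. Qed.

Lemma cmod_distC x y : cmod (x - y) = cmod (y - x).
Proof. by rewrite -cmodN opprB. Qed.

Lemma ler_cmodD x y : cmod (x + y) <= cmod x + cmod y.
Proof. exact: le_normcD. Qed.

Lemma ler_cmod_sum (I : finType) (F : I -> R[i]) :
  cmod (\sum_i F i) <= \sum_i cmod (F i).
Proof.
elim/big_ind2: _ => [|x1 y1 x2 y2 le1 le2|//]; first by rewrite cmod0.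
exact: le_trans (ler_cmodD _ _) (lerD le1 le2).
Qed.

Lemma ger0_cmod (r : R) : 0 <= r -> cmod (r%:C)%C = r.
Proof. by move=> r0; rewrite /cmod /= expr0n /= addr0 sqrtr_sqr ger0_norm. Qed.

Lemma cmod_bool_le1 (b : bool) : cmod (b%:R : R[i]) <= 1.
Proof. by case: b; rewrite ?cmod1 ?cmod0 ?ler01. Qed.

End ComplexModulus.

Section Vectors.
Variables (R : realType) (N : nat).
Local Notation C := R[i].
Implicit Types x y : 'cV[C]_N.

Definition vcoord x (k : nat) : C := oapp (fun i : 'I_N => x i 0) 0 (insub k).

Lemma vcoordE x (i : 'I_N) : vcoord x i = x i 0.
Proof. by rewrite /vcoord valK. Qed.

Lemma vcoord_out x k : (N <= k)%N -> vcoord x k = 0.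
Proof. by move=> Nk; rewrite /vcoord insubF // ltnNge Nk. Qed.

Lemma vcoordP x y : (forall k, (k < N)%N -> vcoord x k = vcoord y k) -> x = y.
Proof. by move=> eq_xy; apply/colP => i; rewrite -!vcoordE eq_xy. Qed.

Lemma vcoord0 k : vcoord 0 k = 0.
Proof. by case: (ltnP k N) => [kN|/vcoord_out//]; rewrite -[k]/(val (Ordinal kN)) vcoordE mxE. Qed.

Lemma vcoordD x y k : vcoord (x + y) k = vcoord x k + vcoord y k.
Proof. by rewrite /vcoord; case: insub => [i|] /=; rewrite ?mxE ?addr0. Qed.

Lemma vcoordZ (c : C) x k : vcoord (c *: x) k = c * vcoord x k.
Proof. by rewrite /vcoord; case: insub => [i|] /=; rewrite ?mxE ?mulr0. Qed.

Lemma vcoord_sum x p : vcoord x p = \sum_(j < N) ((j : nat) == p)%:R * x j 0.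
Proof.
case: (ltnP p N) => [pN|Np].
  rewrite -[p]/(val (Ordinal pN)) vcoordE (bigD1 (Ordinal pN)) //= eqxx mul1r.
  rewrite big1 ?addr0 // => j /negbTE jp.
  by rewrite -(inj_eq val_inj) /= in jp; rewrite jp mul0r.
rewrite vcoord_out // big1 // => j _.
by rewrite ltn_eqF ?mul0r // (leq_trans (ltn_ord j)).
Qed.

Lemma vnormE x : vnorm x = Num.sqrt (\sum_(k < N) cmod (vcoord x k) ^+ 2).
Proof. by congr Num.sqrt; apply: eq_bigr => i _; rewrite vcoordE. Qed.

Lemma vnorm_ge0 x : 0 <= vnorm x.
Proof. exact: sqrtr_ge0. Qed.

Lemma cmod_entry_le_vnorm x (i : 'I_N) : cmod (x i 0) <= vnorm x.
Proof.
rewrite -(ger0_norm (cmod_ge0 _)) -sqrtr_sqr; apply: ler_wsqrtr.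
rewrite (bigD1 i) //= lerDl; apply: sumr_ge0 => j _.
by rewrite exprn_ge0 ?cmod_ge0.
Qed.

Lemma vnorm_eq0 x : vnorm x = 0 -> x = 0.
Proof.
move=> x0; apply/colP => i; rewrite mxE; apply: cmod_eq0.
by apply/eqP; rewrite eq_le cmod_ge0 -x0 cmod_entry_le_vnorm.
Qed.

Lemma vnorm0 : vnorm (0 : 'cV[C]_N) = 0.
Proof. by rewrite /vnorm big1 ?sqrtr0 // => i _; rewrite mxE cmod0 expr0n. Qed.

Lemma vnormZ (c : C) x : vnorm (c *: x) = cmod c * vnorm x.
Proof.
rewrite /vnorm; under eq_bigr => i _ do rewrite mxE cmodM exprMn.
by rewrite -mulr_sumr sqrtrM ?sqr_ge0 // sqrtr_sqr ger0_norm ?cmod_ge0.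
Qed.

Lemma vnormalize x : x != 0 ->
  exists2 u, vnorm u = 1 & x = (vnorm x)%:C%C *: u.
Proof.
move=> x_neq0; have x_gt0 : 0 < vnorm x.
  by rewrite lt_def vnorm_ge0 andbT; apply: contra x_neq0 => /eqP/vnorm_eq0->.
exists ((vnorm x)^-1%:C%C *: x).
  by rewrite vnormZ ger0_cmod ?invr_ge0 ?vnorm_ge0 // mulVf ?gt_eqF.
by rewrite scalerA -rmorphM /= divff ?gt_eqF // scale1r.
Qed.

Definition evec (p : nat) : 'cV[C]_N := \col_i ((i : nat) == p)%:R.

Lemma vcoord_evec p k : (p < N)%N -> vcoord (evec p) k = (k == p)%:R.
Proof.
move=> pN; case: (ltnP k N) => [kN|Nk].
  by rewrite -[k]/(val (Ordinal kN)) vcoordE mxE.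
by rewrite vcoord_out // gtn_eqF // (leq_trans pN).
Qed.

Lemma vnorm_evec p : (p < N)%N -> vnorm (evec p) = 1.
Proof.
move=> pN; rewrite vnormE (bigD1 (Ordinal pN)) //= big1 ?addr0.
  by rewrite vcoord_evec // eqxx cmod1 expr1n sqrtr1.
move=> j /negbTE jp; rewrite -(inj_eq val_inj) /= in jp.
by rewrite vcoord_evec // jp cmod0 expr0n.
Qed.

Lemma evec_neq0 p : (p < N)%N -> evec p != 0.
Proof.
by move=> pN; apply: contra_neq (@oner_neq0 R) => e0; rewrite -(vnorm_evec pN) e0 vnorm0.
Qed.

End Vectors.

Arguments evec {R N} p.

Section Bidiagonal.
Variables (R : realType) (N : nat).
Local Notation C := R[i].
Implicit Types (b c : nat -> C) (x : 'cV[C]_N).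

Definition bidiag b c : 'M[C]_N :=
  \matrix_(i, j) if (i == j :> nat) then b i else if (j == i.+1 :> nat) then c i else 0.

Lemma bidiag_entry b c (i j : 'I_N) :
  bidiag b c i j = b i * ((j : nat) == i)%:R + c i * ((j : nat) == i.+1)%:R.
Proof.
rewrite mxE; case: (eqVneq i j) => [->|ij].
  by rewrite eqxx ltn_eqF // mulr1n mulr0n mulr1 mulr0 addr0.
rewrite [(j : nat) == i]eq_sym !(inj_eq val_inj) (negbTE ij) mulr0n mulr0 add0r.
by case: eqP; rewrite ?mulr1n ?mulr0n ?mulr1 ?mulr0.
Qed.

Lemma vcoord_bidiag b c x k : (k < N)%N ->
  vcoord (bidiag b c *m x) k = b k * vcoord x k + c k * vcoord x k.+1.
Proof.
move=> kN; rewrite -[k]/(val (Ordinal kN)) vcoordE mxE !vcoord_sum !mulr_sumr -big_split /=.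
by apply: eq_bigr => j _; rewrite bidiag_entry mulrDl !mulrA.
Qed.

Lemma bidiag_mulmx_evec b c p : (p < N)%N ->
  bidiag b c *m evec p = b p *: evec p + (if p is q.+1 then c q *: evec q else 0).
Proof.
move=> pN; apply: vcoordP => k kN.
rewrite vcoord_bidiag // vcoordD vcoordZ !vcoord_evec //.
case: p pN => [|q] pN /=.
  by rewrite vcoord0 mulr0n mulr0 !addr0; case: eqP => [->|]; rewrite ?mulr0.
rewrite vcoordZ vcoord_evec ?(ltnW pN) // eqSS.
have [->|_] := eqVneq k q.+1; first by rewrite gtn_eqF // !mulr0n !mulr0.
by have [->|_] := eqVneq k q; rewrite !mulr0n !mulr0.
Qed.

Lemma bidiag_subr b c (lam : C) :
  bidiag b c - lam%:M = bidiag (fun k => b k - lam) c.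
Proof.
apply/matrixP => i j; rewrite !mxE (inj_eq val_inj).
by case: (eqVneq i j) => [->|_]; rewrite ?eqxx ?mulr1n ?mulr0n ?subr0.
Qed.

End Bidiagonal.

Arguments bidiag {R N} b c.

Lemma sqr_wsum_le (R : realDomainType) (I : finType) (w a : I -> R) :
  (forall i, 0 <= w i) ->
  (\sum_i w i * a i) ^+ 2 <= (\sum_i w i) * (\sum_i w i * a i ^+ 2).
Proof.
move=> w_ge0.
have sqrE : (\sum_i w i * a i) ^+ 2 = \sum_i \sum_j (w i * a i) * (w j * a j).
  by rewrite expr2 mulr_suml; apply: eq_bigr => i _; rewrite mulr_sumr.
have prodE : (\sum_i w i) * (\sum_i w i * a i ^+ 2) = \sum_i \sum_j w i * (w j * a j ^+ 2).
  by rewrite mulr_suml; apply: eq_bigr => i _; rewrite mulr_sumr.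
have twiceE : 2 * ((\sum_i w i) * (\sum_i w i * a i ^+ 2)) =
    \sum_i \sum_j (w i * (w j * a j ^+ 2) + w j * (w i * a i ^+ 2)).
  rewrite mulr_natl mulr2n prodE [in X in _ + X]exchange_big -big_split /=.
  by apply: eq_bigr => i _; rewrite -big_split.
rewrite -(@ler_pM2l _ 2) // twiceE sqrE mulr_sumr; apply: ler_sum => i _.
rewrite mulr_sumr; apply: ler_sum => j _.
(* [2 (w_i a_i)(w_j a_j) <= w_i w_j (a_i^2 + a_j^2)] since [w_i w_j (a_i - a_j)^2 >= 0] *)
have := mulr_ge0 (mulr_ge0 (w_ge0 i) (w_ge0 j)) (sqr_ge0 (a i - a j)).
move: (w i) (w j) (a i) (a j) => wi wj ai aj; nra.
Qed.

Lemma ler_sum_shift (R : numDomainType) (N t : nat) (f : nat -> R) :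
  (forall k, 0 <= f k) -> (forall k, (N <= k)%N -> f k = 0) ->
  \sum_(k < N) f (k + t)%N <= \sum_(k < N) f k.
Proof.
elim: t f => [|t IH] f f_ge0 f_out; first by under eq_bigr do rewrite addn0.
under eq_bigr do rewrite addnS.
apply: le_trans (IH (fun k => f k.+1) _ _) _ => // [k Nk|]; first by rewrite f_out // ltnW.
case: N f_out {IH} => [|n] f_out; first by rewrite !big_ord0.
by rewrite big_ord_recr big_ord_recl /= f_out // addr0 addrC lerDl.
Qed.

Lemma sum_exprS_le (R : realDomainType) (x : R) (m : nat) : 1 <= 2 * x ->
  \sum_(t < m) x ^+ t.+1 <= (2 ^+ m - 1) * x ^+ m.
Proof.
move=> x_ge; have x_ge0 : 0 <= x by rewrite -(pmulr_rge0 _ (ltr0n _ 2)) (le_trans ler01).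
elim: m => [|m IH]; first by rewrite big_ord0 expr0 subrr mul0r.
rewrite big_ord_recr /= !exprS.
have two_ge1 : 1 <= (2 : R) ^+ m by rewrite exprn_ege1 // ler1n.
have z_ge0 : 0 <= (2 : R) ^+ m - 1 by rewrite subr_ge0.
have t_ge0 : 0 <= 2 * x - 1 by rewrite subr_ge0.
have := mulr_ge0 (mulr_ge0 z_ge0 t_ge0) (exprn_ge0 m x_ge0).
move: IH two_ge1; move: (\sum_(i < m) x ^+ i.+1) ((2 : R) ^+ m) (x ^+ m) => S z y.
nra.
Qed.

Section BidiagonalLowerBound.
Variables (R : realType) (N : nat) (b c : nat -> R[i]) (delta : R).
Hypotheses (delta_gt0 : 0 < delta) (b_ge : forall k, (k < N)%N -> delta <= cmod (b k))
  (c_le1 : forall k, cmod (c k) <= 1).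

Let T := bidiag b c : 'M[R[i]]_N.

Lemma cmod_vcoord_le_bidiag (x : 'cV[R[i]]_N) r k :
    (exists2 t, (t < r)%N & c (k + t)%N = 0) ->
  cmod (vcoord x k) <= \sum_(t < r) delta^-1 ^+ t.+1 * cmod (vcoord (T *m x) (k + t)).
Proof.
have deltaV_ge0 : 0 <= delta^-1 by rewrite invr_ge0 ltW.
elim: r k => [|r IH] k [t]; first by [].
move=> t_lt ck_t; set U := T *m x.
rewrite big_ord_recl /= addn0 expr1.
under eq_bigr do rewrite /bump leq0n add1n -addSnnS exprS -mulrA.
rewrite -mulr_sumr.
have tail_ge0 : 0 <= \sum_(i < r) delta^-1 ^+ i.+1 * cmod (vcoord U (k.+1 + i)).
  by apply: sumr_ge0 => i _; rewrite mulr_ge0 ?exprn_ge0 ?cmod_ge0.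
have [kN|Nk] := ltnP k N; last first.
  by rewrite vcoord_out // cmod0 addr_ge0 ?mulr_ge0 ?cmod_ge0.
have bk_gt0 : 0 < cmod (b k) := lt_le_trans delta_gt0 (b_ge kN).
have bk_neq0 : b k != 0 by apply: contraTneq bk_gt0 => ->; rewrite cmod0 ltxx.
have xkE : vcoord x k = (b k)^-1 * (vcoord U k - c k * vcoord x k.+1).
  by rewrite vcoord_bidiag // addrK mulKf.
have xk_le : cmod (vcoord x k) <=
    delta^-1 * cmod (vcoord U k) + delta^-1 * (cmod (c k) * cmod (vcoord x k.+1)).
  rewrite xkE cmodM cmodV -mulrDr; apply: ler_pM; rewrite ?invr_ge0 ?cmod_ge0 //.
    by rewrite lef_pV2 ?posrE ?b_ge.
  by rewrite -cmodM -(cmodN (c k * _)) ler_cmodD.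
apply: le_trans xk_le _; rewrite lerD2l ler_wpM2l //.
have [c0|ck_neq0] := eqVneq (c k) 0; first by rewrite c0 cmod0 mul0r.
case: t t_lt ck_t => [|t] t_lt ck_t; first by rewrite addn0 in ck_t; rewrite ck_t eqxx in ck_neq0.
apply: le_trans (ler_piMl (cmod_ge0 _) (c_le1 k)) _.
by apply: IH; exists t; rewrite // addSnnS.
Qed.

Lemma vnorm_le_bidiag m (x : 'cV[R[i]]_N) :
    (forall k, (k < N)%N -> exists2 t, (t < m)%N & c (k + t)%N = 0) ->
  vnorm x <= (\sum_(t < m) delta^-1 ^+ t.+1) * vnorm (T *m x).
Proof.
move=> c_runs; set U := T *m x; set w := fun t : 'I_m => delta^-1 ^+ t.+1.
have w_ge0 t : 0 <= w t by rewrite exprn_ge0 // invr_ge0 ltW.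
have W_ge0 : 0 <= \sum_t w t by apply: sumr_ge0.
have coord_le (k : 'I_N) : cmod (vcoord x k) ^+ 2 <=
    (\sum_t w t) * \sum_t w t * cmod (vcoord U (k + t)) ^+ 2.
  have wsum_ge0 : 0 <= \sum_t w t * cmod (vcoord U (k + t)).
    by apply: sumr_ge0 => t _; rewrite mulr_ge0 ?cmod_ge0.
  apply: le_trans (sqr_wsum_le _ w_ge0); rewrite lerXn2r ?nnegrE ?cmod_ge0 //.
  by have [t ? ?] := c_runs k (ltn_ord k); apply: cmod_vcoord_le_bidiag; exists t.
rewrite !vnormE -(ger0_norm W_ge0) -sqrtr_sqr -sqrtrM ?sqr_ge0 //.
apply: ler_wsqrtr; apply: le_trans (ler_sum _ (fun k _ => coord_le k)) _.
rewrite -mulr_sumr expr2 -mulrA ler_wpM2l // exchange_big mulr_suml.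
apply: ler_sum => t _; rewrite -mulr_sumr ler_wpM2l //.
apply: (@ler_sum_shift _ _ _ (fun k => cmod (vcoord U k) ^+ 2)) => [k|k Nk].
  by rewrite exprn_ge0 ?cmod_ge0.
by rewrite vcoord_out // cmod0 expr0n.
Qed.

End BidiagonalLowerBound.

Section BidiagonalKernel.
Variables (R : realType) (N : nat) (b c : nat -> R[i]) (m : nat).
Hypotheses (c_chain : forall k, c k != 0 -> (k.+1 < N)%N /\ b k.+1 = b k)
  (c_runs : forall k, (k < N)%N -> exists2 t, (t < m)%N & c (k + t)%N = 0).

Let T := bidiag b c : 'M[R[i]]_N.

Lemma vcoord_bidiag_ker (y : 'cV[R[i]]_N) r k : T *m y = 0 -> b k != 0 ->
  (exists2 t, (t < r)%N & c (k + t)%N = 0) -> vcoord y k = 0.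
Proof.
move=> Ty0; elim: r k => [|r IH] k bk [t]; first by [].
move=> t_lt ckt; have [kN|Nk] := ltnP k N; last by rewrite vcoord_out.
have : b k * vcoord y k + c k * vcoord y k.+1 = 0.
  by rewrite -vcoord_bidiag // -/T Ty0 vcoord0.
suff -> : c k * vcoord y k.+1 = 0 by rewrite addr0 => /eqP; rewrite mulf_eq0 (negbTE bk) => /eqP.
have [->|ck] := eqVneq (c k) 0; first by rewrite mul0r.
case: t t_lt ckt => [|t] t_lt ckt; first by rewrite addn0 in ckt; rewrite ckt eqxx in ck.
have [_ bk1] := c_chain ck.
by rewrite (IH k.+1) ?mulr0 ?bk1 //; exists t; rewrite // addSnnS.
Qed.

Lemma vcoord_bidiag_exp (x : 'cV[R[i]]_N) j k : b k = 0 -> (k < N)%N ->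
  vcoord (T ^+ j *m x) k = (\prod_(t < j) c (k + t)%N) * vcoord x (k + j).
Proof.
elim: j k => [|j IH] k bk kN; first by rewrite expr0 mul1mx big_ord0 mul1r addn0.
rewrite exprS -mulmxE -mulmxA vcoord_bidiag // bk mul0r add0r big_ord_recl addn0.
have [->|ck] := eqVneq (c k) 0; first by rewrite !mul0r.
have [k1N bk1] := c_chain ck.
rewrite IH ?bk1 // -mulrA addSnnS; congr (_ * (_ * _)).
by apply: eq_bigr => i _; rewrite lift0 addSnnS.
Qed.

Lemma bidiag_exp_ker (x : 'cV[R[i]]_N) : T ^+ m.+1 *m x = 0 -> T ^+ m *m x = 0.
Proof.
move=> Tx0; have Ty0 : T *m (T ^+ m *m x) = 0 by rewrite mulmxA mulmxE -exprS.
apply: vcoordP => k kN; rewrite vcoord0; have [t t_lt ckt] := c_runs kN.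
have [bk0|bk] := eqVneq (b k) 0; last by apply: vcoord_bidiag_ker Ty0 bk _; exists t.
by rewrite vcoord_bidiag_exp // (bigD1 (Ordinal t_lt)) //= ckt !mul0r.
Qed.

End BidiagonalKernel.

Section OperatorNorms.
Variables (R : realType) (N : nat).
Local Notation C := R[i].
Implicit Types (A : 'M[C]_N) (v x : 'cV[C]_N).

Lemma specnorm_bounded A :
  has_ubound [set vnorm (A *m v) | v in [set v : 'cV[C]_N | vnorm v = 1]].
Proof.
exists (Num.sqrt (\sum_i (\sum_j cmod (A i j)) ^+ 2)) => _ [v /= v1 <-].
apply: ler_wsqrtr; apply: ler_sum => i _.
have rowsum_ge0 : 0 <= \sum_j cmod (A i j) by apply: sumr_ge0 => j _; apply: cmod_ge0.
rewrite lerXn2r ?nnegrE ?cmod_ge0 // mxE; apply: le_trans (ler_cmod_sum _) _.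
apply: ler_sum => j _.
by rewrite cmodM ler_piMr ?cmod_ge0 // -v1 cmod_entry_le_vnorm.
Qed.

Lemma vnorm_mulmx_le A x : vnorm (A *m x) <= specnorm A * vnorm x.
Proof.
have [->|/vnormalize[u u1 ->]] := eqVneq x 0; first by rewrite mulmx0 vnorm0 mulr0.
rewrite -scalemxAr !vnormZ ger0_cmod ?vnorm_ge0 // u1 mulr1 mulrC.
by rewrite ler_wpM2r ?vnorm_ge0 //; apply: (ub_le_sup (specnorm_bounded A)); exists u.
Qed.

Lemma specnorm_ge0 A : (0 < N)%N -> 0 <= specnorm A.
Proof.
move=> N_gt0; apply: le_trans (vnorm_ge0 (A *m evec 0)) _.
by apply: (ub_le_sup (specnorm_bounded A)); exists (evec 0); rewrite //= vnorm_evec.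
Qed.

Lemma sigma_min_le_vnorm A v : vnorm v = 1 -> sigma_min A <= vnorm (A *m v).
Proof.
move=> v1; apply: ge_inf; last by exists v.
by exists 0 => _ [w _ <-]; apply: vnorm_ge0.
Qed.

Lemma le_sigma_min A r : (0 < N)%N ->
  (forall v, vnorm v = 1 -> r <= vnorm (A *m v)) -> r <= sigma_min A.
Proof.
move=> N_gt0 r_le; apply: lb_le_inf => [|_ [v v1 <-]]; last exact: r_le.
by exists (vnorm (A *m evec 0)), (evec 0); rewrite //= vnorm_evec.
Qed.

Lemma mul_sigma_min_ge1 A c : (0 < N)%N ->
  (forall v, vnorm v <= c * vnorm (A *m v)) -> 1 <= c * sigma_min A.
Proof.
move=> N_gt0 le_v; have c_gt0 : 0 < c.
  rewrite ltNge; apply/negP => c_le0; have := le_v (evec 0); rewrite vnorm_evec //.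
  by move/le_trans/(_ (mulr_le0_ge0 c_le0 (vnorm_ge0 _))); rewrite ler10.
rewrite -ler_pdivrMl // mulr1; apply: le_sigma_min => // v v1.
by rewrite -[c^-1]mulr1 ler_pdivrMl // -v1 le_v.
Qed.

Lemma sigma_min_ge0 A : (0 < N)%N -> 0 <= sigma_min A.
Proof. by move=> N_gt0; apply: le_sigma_min => // v _; apply: vnorm_ge0. Qed.

Lemma unit_eigenvector A (lam : C) v : v != 0 -> A *m v = lam *: v ->
  exists2 u, vnorm u = 1 & A *m u = lam *: u.
Proof.
move=> v_neq0 Av; have /vnormalize[u u1 vE] := v_neq0; exists u => //.
move: (vnorm v)%:C%C vE v_neq0 Av => r -> ru_neq0.
have r_neq0 : r != 0 by apply: contra_neq ru_neq0 => ->; rewrite scale0r.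
by rewrite -scalemxAr scalerA mulrC -scalerA => /(scalerI r_neq0).
Qed.

Lemma sigma_min_le_eigen A (lam mu : C) v : v != 0 -> A *m v = lam *: v ->
  sigma_min (A - mu%:M) <= cmod (mu - lam).
Proof.
move=> v_neq0 /(unit_eigenvector v_neq0)[u u1 Au].
apply: le_trans (sigma_min_le_vnorm _ u1) _.
by rewrite mulmxBl Au mul_scalar_mx -scalerBl vnormZ u1 mulr1 cmod_distC.
Qed.

Lemma cmod_eigen_le_specnorm A (lam : C) v : v != 0 -> A *m v = lam *: v ->
  cmod lam <= specnorm A.
Proof.
move=> v_neq0 /(unit_eigenvector v_neq0)[u u1 Au].
by have := vnorm_mulmx_le A u; rewrite Au vnormZ u1 !mulr1.
Qed.

End OperatorNorms.

Section JordanStructure.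
Variables (R : realType) (M : nat) (s : 'I_M -> nat) (l : 'I_M -> R[i]) (N : nat).
Variable E : (\sum_(j < M) s j)%N = N.

Definition jblock (i : 'I_N) : 'I_M := tagnat.sig1 (cast_ord (esym E) i).
Definition joffset (i : 'I_N) : nat := tagnat.sig2 (cast_ord (esym E) i).
Definition block_start (j : 'I_M) : nat := (\sum_(i < M | (i < j)%N) s i)%N.

Definition jordan_diag (k : nat) : R[i] := oapp (fun i => l (jblock i)) 0 (insub k).
Definition jordan_link (k : nat) : bool :=
  oapp (fun i => (joffset i).+1 < s (jblock i))%N false (insub k).

Lemma joffset_lt i : (joffset i < s (jblock i))%N.
Proof. exact: ltn_ord. Qed.

Lemma jordan_indexE (i : 'I_N) : (i : nat) = (block_start (jblock i) + joffset i)%N.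
Proof. exact: tagnat.rect (cast_ord (esym E) i). Qed.

Lemma jordan_index_block j t : (t < s j)%N ->
  exists i : 'I_N, [/\ (i : nat) = (block_start j + t)%N, jblock i = j & joffset i = t].
Proof.
move=> t_lt; exists (cast_ord E (@tagnat.Rank M s j (Ordinal t_lt))).
rewrite /jblock /joffset cast_ordK; split; last by rewrite tagnat.Rank2K.
  exact: tagnat.RankEsum.
exact: tagnat.Rank1K.
Qed.

Lemma jordan_index_succ (i : 'I_N) : ((joffset i).+1 < s (jblock i))%N ->
  exists i' : 'I_N, [/\ (i' : nat) = i.+1, jblock i' = jblock i & joffset i' = (joffset i).+1].
Proof.
move=> /jordan_index_block[i' [i'E bi' oi']]; exists i'.
by rewrite i'E bi' oi' addnS -jordan_indexE.
Qed.

Lemma jordan_diagE (i : 'I_N) : jordan_diag i = l (jblock i).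
Proof. by rewrite /jordan_diag valK. Qed.

Lemma jordan_linkE (i : 'I_N) : jordan_link i = ((joffset i).+1 < s (jblock i))%N.
Proof. by rewrite /jordan_link valK. Qed.

Lemma jordan_link_out k : (N <= k)%N -> jordan_link k = false.
Proof. by move=> Nk; rewrite /jordan_link insubF // ltnNge Nk. Qed.

Lemma jordan_mx_entry (a b : 'I_(\sum_(j < M) s j)) :
  mxdiag (fun j => jordan_block (s j) (l j)) a b =
  if tagnat.sig1 a == tagnat.sig1 b then
    if (tagnat.sig2 a == tagnat.sig2 b :> nat) then l (tagnat.sig1 a)
    else ((tagnat.sig2 b : nat) == (tagnat.sig2 a).+1)%:R
  else 0.
Proof.
rewrite /mxdiag mxE; move: (tagnat.sig2 a) (tagnat.sig2 b).
case: (eqVneq (tagnat.sig1 a) (tagnat.sig1 b)) => [<-|_] u v; last by rewrite mxE.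
by rewrite conform_mx_id !mxE (inj_eq val_inj); case: (u == v) => //; case: eqP.
Qed.

Lemma jordan_mx_bidiag :
  castmx (E, E) (mxdiag (fun j => jordan_block (s j) (l j))) =
  bidiag jordan_diag (fun k => (jordan_link k)%:R).
Proof.
apply/matrixP => i i'; rewrite castmxE jordan_mx_entry mxE jordan_diagE jordan_linkE.
rewrite -/(jblock i) -/(jblock i').
have [same|diff] := eqVneq (jblock i) (jblock i').
  have offE : (i == i' :> nat) = (joffset i == joffset i').
    by rewrite (jordan_indexE i) (jordan_indexE i') same eqn_add2l.
  have succE : (i' == i.+1 :> nat) = (joffset i' == (joffset i).+1).
    by rewrite (jordan_indexE i) (jordan_indexE i') same -addnS eqn_add2l.
  rewrite offE succE; case: ifP => // _; case: eqP => [succ|_]; last by rewrite mulr0n.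
  by rewrite same -succ joffset_lt.
have ii' : (i == i' :> nat) = false.
  by apply: contraNF diff => /eqP/val_inj->.
rewrite ii'; case: eqP => // succ.
case link : ((joffset i).+1 < s (jblock i))%N; last by rewrite mulr0n.
have [i'' [i''E bi'' _]] := jordan_index_succ link.
by move: diff; rewrite -bi'' (_ : i'' = i') ?eqxx //; apply: val_inj; rewrite /= i''E succ.
Qed.

Lemma jordan_link_next k : jordan_link k ->
  (k.+1 < N)%N /\ jordan_diag k.+1 = jordan_diag k.
Proof.
have [kN|Nk] := ltnP k N; last by rewrite jordan_link_out.
rewrite -[k]/(val (Ordinal kN)) jordan_linkE => /jordan_index_succ[i' [<- bi' _]].
by rewrite !jordan_diagE bi'.
Qed.

Lemma jordan_diag_block j t : (t < s j)%N -> jordan_diag (block_start j + t) = l j.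
Proof. by move=> /jordan_index_block[i [<- <- _]]; rewrite jordan_diagE. Qed.

Lemma jordan_link_block j t : (t.+1 < s j)%N -> jordan_link (block_start j + t).
Proof.
move=> t1_lt; have /jordan_index_block[i [<- bi oi]] := ltnW t1_lt.
by rewrite jordan_linkE bi oi.
Qed.

Lemma jordan_link_last j : (0 < s j)%N -> jordan_link (block_start j + (s j).-1) = false.
Proof.
move=> sj_gt0; have /jordan_index_block[i [<- bi oi]] : ((s j).-1 < s j)%N.
  by rewrite ltn_predL.
by rewrite jordan_linkE bi oi prednK // ltnn.
Qed.

Lemma jordan_link_before_start j : (0 < s j)%N -> (0 < block_start j)%N ->
  jordan_link (block_start j).-1 = false.
Proof.
move=> /jordan_index_block[i [iE _ oi]] start_gt0.
have [kN|/jordan_link_out//] := ltnP (block_start j).-1 N.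
apply: negbTE; apply/negP.
rewrite -[_.-1]/(val (Ordinal kN)) jordan_linkE => /jordan_index_succ[i' [i'E _ oi']].
suff i'i : i' = i by move: oi'; rewrite i'i oi.
by apply: val_inj; rewrite /= i'E iE addn0 prednK.
Qed.

Lemma jordan_link_runs m : (forall j, (s j <= m)%N) ->
  forall k, (k < N)%N -> exists2 t, (t < m)%N & jordan_link (k + t) = false.
Proof.
move=> s_le k kN; pose i := Ordinal kN.
have s_gt0 : (0 < s (jblock i))%N := leq_ltn_trans (leq0n _) (joffset_lt i).
exists ((s (jblock i)).-1 - joffset i)%N.
  apply: leq_ltn_trans (leq_subr _ _) _; apply: leq_trans (s_le (jblock i)).
  by rewrite ltn_predL.
have off_le : (joffset i <= (s (jblock i)).-1)%N by rewrite -ltnS prednK ?joffset_lt.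
by rewrite -[k]/(nat_of_ord i) (jordan_indexE i) -addnA subnKC // jordan_link_last.
Qed.

Lemma block_start_add_lt j t : (t < s j)%N -> (block_start j + t < N)%N.
Proof. by move=> /jordan_index_block[i [<- _ _]]. Qed.

Lemma block_start_lt j : (0 < s j)%N -> (block_start j < N)%N.
Proof. by rewrite -[X in (X < N)%N]addn0; apply: block_start_add_lt. Qed.

End JordanStructure.

Lemma exp_mulmx_similar (F : comUnitRingType) (N k : nat) (A B P : 'M[F]_N)
    (y : 'cV[F]_N) : P \in unitmx -> A = P *m B *m invmx P ->
  A ^+ k *m (P *m y) = P *m (B ^+ k *m y).
Proof.
move=> P_unit AE; elim: k => [|k IH]; first by rewrite !expr0 !mul1mx.
rewrite !exprS -!mulmxE -!mulmxA IH {1}AE !mulmxA mulmxKV //.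
Qed.

Lemma unitmx_mulmx_eq0 (F : comUnitRingType) (N : nat) (P : 'M[F]_N) (y : 'cV[F]_N) :
  P \in unitmx -> P *m y = 0 -> y = 0.
Proof. by move=> P_unit Py0; rewrite -(mulKmx P_unit y) Py0 mulmx0. Qed.

Section JordanDecomposition.
Variables (R : realType) (N : nat) (A P : 'M[R[i]]_N).
Variables (M : nat) (s : 'I_M -> nat) (l : 'I_M -> R[i]).
Variable E : (\sum_(j < M) s j)%N = N.
Hypotheses (P_unit : P \in unitmx) (s_gt0 : forall j, (0 < s j)%N)
  (AE : A = P *m castmx (E, E) (mxdiag (fun j => jordan_block (s j) (l j))) *m invmx P).

Let J (lam : R[i]) : 'M[R[i]]_N :=
  bidiag (fun k => jordan_diag l E k - lam) (fun k => (jordan_link E k)%:R).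

Lemma jordan_decomp_exp lam k (y : 'cV[R[i]]_N) :
  (A - lam%:M) ^+ k *m (P *m y) = P *m (J lam ^+ k *m y).
Proof.
apply: exp_mulmx_similar => //; rewrite AE jordan_mx_bidiag /J -bidiag_subr.
by rewrite mulmxBr mulmxBl mul_mx_scalar -scalemxAl mulmxV // scalemx1.
Qed.

Lemma jordan_shift_block_start j : J (l j) *m evec (block_start s j) = 0.
Proof.
rewrite bidiag_mulmx_evec ?(block_start_lt E) //.
rewrite -[X in jordan_diag l E X]addn0 jordan_diag_block //.
rewrite subrr scale0r add0r.
have := jordan_link_before_start E (s_gt0 j).
by case: (block_start s j) => [|q] //= ->; rewrite // scale0r.
Qed.

Lemma jordan_shift_chain j t : (t.+1 < s j)%N ->
  J (l j) *m evec (block_start s j + t.+1) = evec (block_start s j + t).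
Proof.
move=> t1_lt; rewrite bidiag_mulmx_evec ?block_start_add_lt //=.
rewrite jordan_diag_block // subrr scale0r add0r.
by rewrite addnS jordan_link_block // scale1r.
Qed.

Lemma jordan_shift_exp_chain j t : (t < s j)%N ->
  J (l j) ^+ t *m evec (block_start s j + t) = evec (block_start s j).
Proof.
elim: t => [|t IH] t_lt; first by rewrite expr0 mul1mx addn0.
by rewrite exprSr -mulmxE -mulmxA jordan_shift_chain // IH // ltnW.
Qed.

Lemma jordan_link_chain lam k : (jordan_link E k)%:R != 0 :> R[i] ->
  (k.+1 < N)%N /\ jordan_diag l E k.+1 - lam = jordan_diag l E k - lam.
Proof.
case link : (jordan_link E k); last by rewrite mulr0n eqxx.
by have [-> ->] := jordan_link_next l link.
Qed.

Lemma jordan_decomp_eigen j : exists2 v : 'cV[R[i]]_N, v != 0 & A *m v = l j *: v.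
Proof.
exists (P *m evec (block_start s j)).
  exact: contra_neq (unitmx_mulmx_eq0 P_unit) (evec_neq0 R (block_start_lt E (s_gt0 j))).
apply/eqP; rewrite -subr_eq0 -mul_scalar_mx -mulmxBl -[A - _]expr1.
by rewrite jordan_decomp_exp expr1 jordan_shift_block_start mulmx0.
Qed.

Lemma jordan_decomp_eigen_mem lam (v : 'cV[R[i]]_N) :
  v != 0 -> A *m v = lam *: v -> exists j, lam = l j.
Proof.
move=> v_neq0 Av; have [j /eqP->|no_j] := pickP (fun j => lam == l j); first by exists j.
case/eqP: v_neq0; rewrite -(mulKVmx P_unit v); set y := invmx P *m v.
have Jy0 : J lam *m y = 0.
  apply: (unitmx_mulmx_eq0 P_unit); rewrite -[J lam]expr1 -jordan_decomp_exp expr1 mulKVmx //.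
  by rewrite mulmxBl Av mul_scalar_mx subrr.
suff -> : y = 0 by rewrite mulmx0.
apply: vcoordP => k kN; rewrite vcoord0.
apply: (vcoord_bidiag_ker (jordan_link_chain lam) (r := N.+1) Jy0).
  rewrite -[k]/(nat_of_ord (Ordinal kN)) jordan_diagE subr_eq0.
  by apply/negP => /eqP lamE; move: (no_j (jblock E (Ordinal kN))); rewrite lamE eqxx.
by exists (N - k)%N; rewrite ?ltnS ?leq_subr // -maxnE jordan_link_out ?leq_maxr.
Qed.

Lemma jordan_decomp_exp_ker m lam (x : 'cV[R[i]]_N) : (forall j, (s j <= m)%N) ->
  (A - lam%:M) ^+ m.+1 *m x = 0 -> (A - lam%:M) ^+ m *m x = 0.
Proof.
move=> s_le; rewrite -(mulKVmx P_unit x) !jordan_decomp_exp.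
move=> /(unitmx_mulmx_eq0 P_unit) Jx0.
rewrite (bidiag_exp_ker (jordan_link_chain lam) _ Jx0) ?mulmx0 // => k kN.
by have [t t_lt link0] := jordan_link_runs E s_le kN; exists t; rewrite // link0.
Qed.

Lemma jordan_decomp_ascent j : exists v : 'cV[R[i]]_N,
  (A - (l j)%:M) ^+ s j *m v = 0 /\ (A - (l j)%:M) ^+ (s j).-1 *m v != 0.
Proof.
set t := (s j).-1; have t_lt : (t < s j)%N by rewrite ltn_predL.
have sjE : s j = t.+1 by rewrite prednK.
exists (P *m evec (block_start s j + t)); rewrite sjE !jordan_decomp_exp; split.
  by rewrite exprS -mulmxE -mulmxA jordan_shift_exp_chain // jordan_shift_block_start !mulmx0.
rewrite jordan_shift_exp_chain //.
exact: contra_neq (unitmx_mulmx_eq0 P_unit) (evec_neq0 R (block_start_lt E (s_gt0 j))).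
Qed.

Lemma jordan_decomp_vnorm_le mu delta m : (0 < N)%N -> 0 < delta ->
    (forall j, delta <= cmod (l j - mu)) -> (forall j, (s j <= m)%N) ->
  forall x : 'cV[R[i]]_N, vnorm x <=
    specnorm P * (\sum_(t < m) delta^-1 ^+ t.+1) * specnorm (invmx P) * vnorm ((A - mu%:M) *m x).
Proof.
move=> N_gt0 delta_gt0 delta_le s_le x; set y := invmx P *m x.
have xE : x = P *m y by rewrite mulKVmx.
have Jy : J mu *m y = invmx P *m ((A - mu%:M) *m x).
  by rewrite xE -[A - _]expr1 jordan_decomp_exp expr1 mulKmx.
have y_le : vnorm y <= (\sum_(t < m) delta^-1 ^+ t.+1) * vnorm (J mu *m y).
  apply: vnorm_le_bidiag => // [k kN|k|k kN].
  - by rewrite -[k]/(nat_of_ord (Ordinal kN)) jordan_diagE.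
  - exact: cmod_bool_le1.
  - by have [t ? link0] := jordan_link_runs E s_le kN; exists t; rewrite //= link0.
rewrite {1}xE; apply: le_trans (vnorm_mulmx_le _ _) _; rewrite -!mulrA.
have W_ge0 : 0 <= \sum_(t < m) delta^-1 ^+ t.+1.
  by apply: sumr_ge0 => t _; rewrite exprn_ge0 // invr_ge0 ltW.
rewrite ler_wpM2l ?specnorm_ge0 //; apply: le_trans y_le _.
by rewrite ler_wpM2l // Jy vnorm_mulmx_le.
Qed.

Lemma jordan_decomp_cond_bound mu delta m : (0 < N)%N -> 0 < delta -> delta <= 2 ->
    (forall j, delta <= cmod (l j - mu)) -> (forall j, (s j <= m)%N) ->
  delta ^+ m <= 2 ^+ m * (specnorm P * specnorm (invmx P) * sigma_min (A - mu%:M)).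
Proof.
move=> N_gt0 delta_gt0 delta_le2 delta_le s_le.
have := mul_sigma_min_ge1 N_gt0 (jordan_decomp_vnorm_le N_gt0 delta_gt0 delta_le s_le).
set W := \sum_(t < m) _; set p := specnorm P; set q := specnorm (invmx P).
set sigma := sigma_min (A - mu%:M) => ge1.
have W_le : delta ^+ m * W <= 2 ^+ m.
  have := @sum_exprS_le _ delta^-1 m; rewrite ler_pdivlMr // mul1r => /(_ delta_le2) W_le.
  rewrite mulrC; apply: le_trans (ler_wpM2r (exprn_ge0 _ (ltW delta_gt0)) W_le) _.
  by rewrite exprVn -mulrA mulVf ?mulr1 ?gerBl // gt_eqF ?exprn_gt0.
have pqs_ge0 : 0 <= p * q * sigma by rewrite !mulr_ge0 ?specnorm_ge0 ?sigma_min_ge0.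
apply: le_trans (_ : (delta ^+ m * W) * (p * q * sigma) <= _); last exact: ler_wpM2r.
have -> : delta ^+ m * W * (p * q * sigma) = delta ^+ m * (p * W * q * sigma) by ring.
by rewrite -{1}[delta ^+ m]mulr1 ler_pM2l ?exprn_gt0.
Qed.

End JordanDecomposition.

Section JordanUniqueness.
Variables (R : realType) (N : nat) (A P P' : 'M[R[i]]_N).
Variables (M M' : nat) (s : 'I_M -> nat) (s' : 'I_M' -> nat).
Variables (l : 'I_M -> R[i]) (l' : 'I_M' -> R[i]).
Hypotheses (decA : is_jordan_decomp A P s l) (decA' : is_jordan_decomp A P' s' l').

Lemma jordan_decomp_eigen_eq j' : exists j, l' j' = l j.
Proof.
have [P_unit [_ [E AE]]] := decA; have [P'_unit [s'_gt0 [E' A'E]]] := decA'.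
have [v v_neq0 Av] := jordan_decomp_eigen P'_unit s'_gt0 A'E j'.
exact: (jordan_decomp_eigen_mem (lam := l' j') P_unit AE v_neq0 Av).
Qed.

Lemma jordan_decomp_size_le m : (forall j, (s j <= m)%N) -> forall j', (s' j' <= m)%N.
Proof.
have [P_unit [_ [E AE]]] := decA; have [P'_unit [s'_gt0 [E' A'E]]] := decA'.
move=> s_le j'; rewrite leqNgt; apply/negP => m_lt.
have [v [v0 /eqP[]]] := jordan_decomp_ascent P'_unit s'_gt0 A'E j'.
apply: (jordan_decomp_exp_ker P_unit AE) => [j|]; last by rewrite prednK.
by rewrite -ltnS prednK // (leq_ltn_trans (s_le j)).
Qed.

End JordanUniqueness.

Lemma jordan_kappa_bound (R : realType) (N : nat) (A P : 'M[R[i]]_N) (M : nat)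
    (s : 'I_M -> nat) (l : 'I_M -> R[i]) (m : nat) (mu : R[i]) (delta : R) :
    (0 < N)%N -> is_jordan_decomp A P s l -> (forall j, (s j <= m)%N) ->
    0 < delta -> delta <= 2 -> (forall j, delta <= cmod (mu - l j)) ->
  delta ^+ m <= 2 ^+ m * (jordan_kappa A * sigma_min (A - mu%:M)).
Proof.
move=> N_gt0 decA s_le delta_gt0 delta_le2 delta_le; set sigma := sigma_min (A - mu%:M).
have cond_bound P' : (exists M' s' l', @is_jordan_decomp R N A P' M' s' l') ->
    delta ^+ m <= 2 ^+ m * (specnorm P' * specnorm (invmx P') * sigma).
  move=> [M' [s' [l' decA']]]; have [P'_unit [_ [E' A'E]]] := decA'.
  apply: (jordan_decomp_cond_bound P'_unit A'E) => // [j'|].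
    by have [j ->] := jordan_decomp_eigen_eq decA decA' j'; rewrite cmod_distC.
  exact: (jordan_decomp_size_le decA decA' s_le).
have decP : exists M' s' l', @is_jordan_decomp R N A P M' s' l' by exists M, s, l.
have sigma_gt0 : 0 < sigma.
  rewrite lt_def sigma_min_ge0 // andbT; apply: contraTneq (cond_bound P decP) => ->.
  by rewrite !mulr0 -ltNge exprn_gt0.
have c_gt0 : 0 < 2 ^+ m * sigma by rewrite mulr_gt0 ?exprn_gt0.
rewrite mulrCA -ler_pdivrMr //; apply: lb_le_inf => [|_ [P' decA' <-]].
  by exists (specnorm P * specnorm (invmx P)), P.
by rewrite ler_pdivrMr // mulrCA cond_bound.
Qed.

Lemma le_mul_powR_inv (R : realType) (a b x : R) (m : nat) :
  (0 < m)%N -> 0 <= a -> 0 < b -> a ^+ m <= b ^+ m * x -> a <= b * powR x m%:R^-1.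
Proof.
move=> m_gt0 a_ge0 b_gt0 le_am.
have x_ge0 : 0 <= x.
  by rewrite -(pmulr_rge0 _ (exprn_gt0 m b_gt0)) (le_trans (exprn_ge0 m a_ge0)).
have m_neq0 : (m%:R : R) != 0 by rewrite pnatr_eq0 -lt0n.
have rootK (y : R) : 0 <= y -> powR (y ^+ m) m%:R^-1 = y.
  by move=> y_ge0; rewrite -powR_mulrn // -powRrM divff // powRr1.
have b_ge0 := ltW b_gt0; have r_ge0 : 0 <= m%:R^-1 :> R by rewrite invr_ge0 ler0n.
rewrite -(rootK a) // -(rootK b) // -powRM ?exprn_ge0 //.
by apply: (ge0_ler_powR r_ge0) => //; rewrite nnegrE ?mulr_ge0 ?exprn_ge0.
Qed.

Unset Implicit Arguments.

Theorem lemma1 (R : realType) (N : nat) (A P : 'M[R[i]]_N)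
  (M : nat) (s : 'I_M -> nat) (l : 'I_M -> R[i]) (mmax : nat) (K : R)
  (mu : R[i]) :
  (0 < N)%N ->
  specnorm A <= 1 ->
  is_jordan_decomp A P s l ->
  (forall j, (s j <= mmax)%N) ->
  jordan_kappa A <= K ->
  cmod mu <= 1 ->
  (forall j, sigma_min (A - mu%:M) <= cmod (mu - l j)) /\
  (exists j, cmod (mu - l j)
             <= 3 * powR (K * sigma_min (A - mu%:M)) (mmax%:R)^-1).
Proof.
move=> N_gt0 A_le1 decA s_le kappa_le mu_le1; have [P_unit [s_gt0 [E AE]]] := decA.
have eigen := jordan_decomp_eigen P_unit s_gt0 AE.
split=> [j|]; first by have [v v_neq0 Av] := eigen j; apply: sigma_min_le_eigen v_neq0 Av.
pose j1 := jblock E (Ordinal N_gt0).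
have [j0 _ j0_min] := arg_minP (fun j => cmod (mu - l j)) (isT : predT j1).
exists j0; set delta := cmod (mu - l j0); set sigma := sigma_min (A - mu%:M).
have [->|delta_neq0] := eqVneq delta 0; first by rewrite mulr_ge0 ?powR_ge0.
have delta_gt0 : 0 < delta by rewrite lt_def delta_neq0 cmod_ge0.
have delta_le2 : delta <= 2.
  have [v v_neq0 Av] := eigen j0; have := cmod_eigen_le_specnorm v_neq0 Av.
  by have := ler_cmodD mu (- l j0); rewrite cmodN -/delta; lra.
have K_bound : delta ^+ mmax <= 2 ^+ mmax * (K * sigma).
  have := jordan_kappa_bound N_gt0 decA s_le delta_gt0 delta_le2 (fun j => j0_min j isT).
  by move/le_trans; apply; rewrite ler_wpM2l ?exprn_ge0 // ler_wpM2r ?sigma_min_ge0.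
have m_gt0 : (0 < mmax)%N := leq_trans (s_gt0 j0) (s_le j0).
apply: le_trans (le_mul_powR_inv m_gt0 (cmod_ge0 _) _ K_bound) _ => //.
(* The argument gives the constant 2. *)
by rewrite ler_wpM2r ?powR_ge0 // ler_nat.
Qed.
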